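(* Let $\widehat P$ be any transition kernel on finite $\mathcal S\times\mathcal A$, $r:\mathcal S\times\mathcal A\to[0,1]$, $n\ge2$ an integer, $s_0\in\mathcal S$, and $\underline{\widehat P}=(1-\frac1n)\widehat P+\frac1n\mathbf 1e_{s_0}^\top$. If a policy $\pi$ is greedy with respect to $r+\underline{\widehat P}h$ for some $h\in\mathbb R^{\mathcal S}$, then $$\widehat V^\star_{1-\frac1n}-\widehat V^\pi_{1-\frac1n}\le(n-1)\,\|\underline{\widehat h}^\star-h\|_{\mathrm{sp}}\,\mathbf 1 .$$
   Context: $\underline{\widehat P}(s'|s,a)=(1-\frac1n)\widehat P(s'|s,a)+\frac1n\mathbb 1\{s'=s_0\}$. For $x\in\mathbb R^{\mathcal S\times\mathcal A}$, a policy $\pi$ is greedy with respect to $x$ if $\sum_a\pi(a|s)x(s,a)=\max_ax(s,a)$ for all $s$; here $(r+\underline{\widehat P}h)(s,a)=r(s,a)+\sum_{s'}\underline{\widehat P}(s'|s,a)h(s')$. $\widehat V^\pi_\gamma=(I-\gamma\widehat P_\pi)^{-1}r_\pi$ and $\widehat V^\star_\gamma=\max_\pi\widehat V^\pi_\gamma$, with $\widehat P_\pi(s,s')=\sum_a\pi(a|s)\widehat P(s'|s,a)$, $r_\pi(s)=\sum_a\pi(a|s)r(s,a)$. $\underline{\widehat h}^\star$ is the optimal bias of the average-reward MDP $(\underline{\widehat P},r)$ (bias $\mathrm{C\text{-}lim}_T\sum_{t<T}(Q_\pi^tr_\pi-Q^\infty_\pi r_\pi)$ with $Q=\underline{\widehat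 P}$ of a Blackwell-optimal policy). $\|x\|_{\mathrm{sp}}=\max x-\min x$. *)

From HB Require Import structures.
From mathcomp Require Import all_boot all_order all_algebra.
From mathcomp Require Import all_classical all_reals all_analysis.
Set Implicit Arguments. Unset Strict Implicit. Unset Printing Implicit Defensive.
Import Order.TTheory GRing.Theory Num.Theory numFieldNormedType.Exports.
Local Open Scope classical_set_scope.
Local Open Scope ring_scope.

Section MDP.
Variables (R : realType) (m : nat) (A : finType).

(* P s a s' = P(s' | s, a) is a transition kernel. *)
Definition is_kernel (P : 'I_m -> A -> 'I_m -> R) :=
  (forall s a s', 0 <= P s a s') /\ (forall s a, \sum_(s' < m) P s a s' = 1).

(* a (stationary, possibly randomized) policy pi s a = pi(a | s) *)
Definition is_policy (pi : 'I_m -> A -> R) :=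
  (forall s a, 0 <= pi s a) /\ (forall s, \sum_(a : A) pi s a = 1).

Definition Plow (P : 'I_m -> A -> 'I_m -> R) (n : nat) (s0 : 'I_m) :
    'I_m -> A -> 'I_m -> R :=
  fun s a s' => (1 - n%:R^-1) * P s a s' + n%:R^-1 * (s' == s0)%:R.

Definition Ppi (P : 'I_m -> A -> 'I_m -> R) (pi : 'I_m -> A -> R) : 'M[R]_m :=
  \matrix_(s, s') \sum_(a : A) pi s a * P s a s'.

Definition rpi (r : 'I_m -> A -> R) (pi : 'I_m -> A -> R) : 'cV[R]_m :=
  \col_s \sum_(a : A) pi s a * r s a.

Definition Vpi (P : 'I_m -> A -> 'I_m -> R) (r : 'I_m -> A -> R) (gamma : R)
    (pi : 'I_m -> A -> R) : 'cV[R]_m :=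
  invmx (1%:M - gamma *: Ppi P pi) *m rpi r pi.

(* V^*_gamma = max over policies (pointwise supremum, attained) *)
Definition Vstar (P : 'I_m -> A -> 'I_m -> R) (r : 'I_m -> A -> R) (gamma : R)
    (s : 'I_m) : R :=
  sup [set (Vpi P r gamma pi) s 0 | pi in [set pi | is_policy pi]].

Definition greedy (pi : 'I_m -> A -> R) (x : 'I_m -> A -> R) :=
  forall s, \sum_(a : A) pi s a * x s a = sup (range (x s)).

Definition rPh (P : 'I_m -> A -> 'I_m -> R) (r : 'I_m -> A -> R) (h : 'I_m -> R) :
    'I_m -> A -> R :=
  fun s a => r s a + \sum_(s' < m) P s a s' * h s'.

Definition spn (x : 'I_m -> R) : R := sup (range x) - inf (range x).

Definition mpow (Q : 'M[R]_m) (t : nat) : 'M[R]_m := iter t (mulmx Q) 1%:M.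

Definition cesaro_lim (u : nat -> R) : R :=
  limn (fun T : nat => (T%:R^-1 * \sum_(t < T) u t : R)).

Definition Qinf (Q : 'M[R]_m) : 'M[R]_m :=
  \matrix_(i, j) cesaro_lim (fun t => mpow Q t i j).

Definition bias (P : 'I_m -> A -> 'I_m -> R) (r : 'I_m -> A -> R)
    (pi : 'I_m -> A -> R) (s : 'I_m) : R :=
  let Q := Ppi P pi in
  cesaro_lim (fun T => \sum_(t < T)
     ((mpow Q t *m rpi r pi) s 0 - (Qinf Q *m rpi r pi) s 0)).

Definition blackwell_optimal (P : 'I_m -> A -> 'I_m -> R) (r : 'I_m -> A -> R)
    (pi : 'I_m -> A -> R) :=
  is_policy pi /\
  exists gamma0 : R, 0 <= gamma0 < 1 /\
    forall gamma : R, gamma0 < gamma < 1 ->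
      forall s, (Vpi P r gamma pi) s 0 = Vstar P r gamma s.

End MDP.

From HB Require Import structures.
From mathcomp Require Import all_boot all_order all_algebra.
From mathcomp Require Import all_classical all_reals all_analysis.
From mathcomp Require Import lra ring.
Import Order.TTheory GRing.Theory Num.Theory numFieldNormedType.Exports.
Local Open Scope classical_set_scope.
Local Open Scope ring_scope.
Set Implicit Arguments. Unset Strict Implicit. Unset Printing Implicit Defensive.

(* Write [k = 1/n] and [gamma = 1 - k].  For every policy the reset chain
   [Plow = (1 - k) P + k 1 e_{s0}^T] has Cesaro limit [k 1 e_{s0}^T (I - gamma P_pi)^-1],
   so the bias of a policy in [(Plow, r)] is its [gamma]-discounted value in [(P, r)]
   up to an additive constant.  Discounting [Plow] at [b] amounts to discounting [P]
   at [b (1 - k)] plus a constant, with the same advantages; hence a Blackwell-optimal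
   policy [piB] of [Plow] has no improving action in [P] at the discounts [b (1 - k)],
   and by continuity none at [gamma], so [V^piB_gamma] dominates [V*_gamma].  Finally
   [V^piB_gamma = h + (h* - h) + const], and a policy greedy for [r + Plow h] loses at
   most [gamma sp(h* - h)] per step against [piB], that is at most
   [gamma / (1 - gamma) sp(h* - h) = (n - 1) sp(h* - h)] in total. *)

Section Averages.
Variables (R : realType) (I : finType).
Implicit Types (p f : I -> R) (X : R).

Lemma avg_le p f X : (forall i, 0 <= p i) -> \sum_i p i = 1 ->
  (forall i, f i <= X) -> \sum_i p i * f i <= X.
Proof.
move=> p0 p1 fX; apply: le_trans (_ : \sum_i p i * X <= X).
  by apply: ler_sum => i _; apply: ler_wpM2l.
by rewrite -mulr_suml p1 mul1r.
Qed.

Lemma avg_ge p f X : (forall i, 0 <= p i) -> \sum_i p i = 1 ->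
  (forall i, X <= f i) -> X <= \sum_i p i * f i.
Proof.
move=> p0 p1 Xf; rewrite -lerN2 -sumrN.
under eq_bigr do rewrite -mulrN.
by apply: avg_le => // i; rewrite lerN2.
Qed.

Lemma avg_norm_le p f X : (forall i, 0 <= p i) -> \sum_i p i = 1 ->
  (forall i, `|f i| <= X) -> `|\sum_i p i * f i| <= X.
Proof.
move=> p0 p1 fX; rewrite ler_norml; apply/andP; split.
  by apply: avg_ge => // i; move: (fX i); rewrite ler_norml => /andP[].
by apply: avg_le => // i; move: (fX i); rewrite ler_norml => /andP[].
Qed.

Lemma sum_indicator (i0 : I) f : \sum_i (i == i0)%:R * f i = f i0.
Proof.
by rewrite (bigD1 i0) //= eqxx mul1r big1 ?addr0 // => i /negbTE ->; rewrite mul0r.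
Qed.

Lemma norm_le_sum_norm f i : `|f i| <= \sum_l `|f l|.
Proof. by rewrite (bigD1 i) //= lerDl sumr_ge0. Qed.

Lemma le_sup_range f i : f i <= sup (range f).
Proof.
apply: ub_le_sup; last by exists i.
exists (\sum_l `|f l|) => _ [l _ <-].
exact: le_trans (ler_norm _) (norm_le_sum_norm f l).
Qed.

Lemma inf_range_le f i : inf (range f) <= f i.
Proof.
apply: ge_inf; last by exists i.
exists (- \sum_l `|f l|) => _ [l _ <-].
by rewrite lerNl; apply: le_trans (norm_le_sum_norm f l); rewrite -normrN ler_norm.
Qed.

End Averages.

Lemma cesaro_lim_geometric (R : realType) (g : R) (u : nat -> R) (L C : R) :
  0 <= g < 1 -> (forall T, `|u T - L| <= C * g ^+ T) -> cesaro_lim u = L.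
Proof.
move=> /andP[g0 g1] uL.
have gT0 : (fun T : nat => C * g ^+ T) @ \oo --> 0.
  rewrite -(mulr0 C); apply: cvgM; first exact: cvg_cst.
  by apply: cvg_expr; rewrite ger0_norm.
have u_cvg : u @ \oo --> L.
  apply: (@squeeze_cvgr _ _ _ _ (fun T => L - C * g ^+ T) (fun T => L + C * g ^+ T)).
  - by near=> T; have := uL T; rewrite ler_norml => /andP[? ?]; apply/andP; split; lra.
  - by have := cvgB (cvg_cst L) gT0; rewrite subr0; exact.
  - by have := cvgD (cvg_cst L) gT0; rewrite addr0; exact.
apply: cvg_lim => //; rewrite -cvg_shiftS; apply: cvg_trans (cesaro u_cvg).
apply: near_eq_cvg; near=> T.
by rewrite /arithmetic_mean /series /= big_mkord.
Unshelve. all: by end_near.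
Qed.

Section DiscountedFixpoint.
Variables (R : realType) (m : nat).
Implicit Types (S : 'M[R]_m) (d : R) (x y : 'I_m -> R).

Definition stochastic S := (forall i j, 0 <= S i j) /\ (forall i, \sum_j S i j = 1).

Lemma stochastic_le1 S i j : stochastic S -> S i j <= 1.
Proof. by move=> [S0 S1]; rewrite -(S1 i) (bigD1 j) //= lerDl sumr_ge0. Qed.

Definition disc_fix S d x y := forall i, x i = y i + d * \sum_j S i j * x j.

Lemma disc_fix_opp S d x y :
  disc_fix S d x y -> disc_fix S d (fun i => - x i) (fun i => - y i).
Proof.
move=> xE i; rewrite xE opprD -mulrN -sumrN; congr (_ + _ * _).
by apply: eq_bigr => j _; rewrite mulrN.
Qed.

Lemma disc_fix_le S d x y B : stochastic S -> 0 <= d < 1 -> 0 <= B ->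
  disc_fix S d x y -> (forall i, y i <= B) -> forall i, x i <= B / (1 - d).
Proof.
move=> [S0 S1] /andP[d0 d1] B0 xE yB i.
(* Maximum principle: the largest value [X] of [x] satisfies [X <= B + d X]. *)
set X := \big[Num.max/0]_j x j.
have X0 : 0 <= X := bigmax_ge_id _ _ _ _.
have SX k : \sum_j S k j * x j <= X by apply: avg_le => // j; apply: le_bigmax.
have xX k : x k <= B + d * X by rewrite xE lerD // ler_wpM2l.
have : X <= B + d * X by apply: bigmax_le => [|k _]; [nra | exact: xX].
have : x i <= X by apply: le_bigmax.
by rewrite ler_pdivlMr; [nra | lra].
Qed.

Lemma disc_fix_ge S d x y : stochastic S -> 0 <= d < 1 ->
  disc_fix S d x y -> (forall i, 0 <= y i) -> forall i, y i <= x i.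
Proof.
move=> SS dd xE y0 i.
have x0 k : 0 <= x k.
  rewrite -oppr_le0 -(@mul0r _ (1 - d)^-1).
  apply: disc_fix_le (disc_fix_opp xE) _ k => // j.
  by rewrite oppr_le0.
case: SS => S0 S1; rewrite xE lerDl; apply: mulr_ge0; first by case/andP: dd.
by apply: avg_ge.
Qed.

Lemma disc_fix_norm S d x y B : stochastic S -> 0 <= d < 1 ->
  disc_fix S d x y -> (forall i, `|y i| <= B) -> forall i, `|x i| <= B / (1 - d).
Proof.
move=> SS dd xE yB i; have B0 : 0 <= B := le_trans (normr_ge0 _) (yB i).
rewrite ler_norml; apply/andP; split; last first.
  by apply: disc_fix_le xE _ i => // j; apply: le_trans (ler_norm _) (yB j).
rewrite lerNl.
apply: disc_fix_le (disc_fix_opp xE) _ i => // j.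
by apply: le_trans (yB j); rewrite -normrN ler_norm.
Qed.

Lemma disc_fix0 S d x : stochastic S -> 0 <= d < 1 ->
  disc_fix S d x (fun=> 0) -> forall i, x i = 0.
Proof.
move=> SS dd xE i; apply/eqP; rewrite -normr_le0 -(mul0r (1 - d)^-1).
by apply: disc_fix_norm xE _ i => // j; rewrite normr0.
Qed.

Lemma disc_mx_unit S d : stochastic S -> 0 <= d < 1 -> 1%:M - d *: S \in unitmx.
Proof.
move=> SS dd; rewrite unitmxE unitfE -det_tr; apply/negP => /det0P[v v0 vS].
have Sv : (1%:M - d *: S) *m v^T = 0 by rewrite -[_ *m _]trmxK trmx_mul trmxK vS trmx0.
have vE : disc_fix S d (fun i => v^T i 0) (fun=> 0).
  move=> i; have := congr1 (fun M : 'M[R]_(m, 1) => M i 0) Sv.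
  rewrite mulmxBl mul1mx -scalemxAl !mxE => /eqP; rewrite subr_eq0 => /eqP ->.
  by rewrite add0r.
move/negP: v0; apply; apply/eqP/rowP => j.
by have := disc_fix0 SS dd vE j; rewrite !mxE.
Qed.

Lemma disc_solve_fix S d (y : 'cV[R]_m) : stochastic S -> 0 <= d < 1 ->
  disc_fix S d (fun i => (invmx (1%:M - d *: S) *m y) i 0) (fun i => y i 0).
Proof.
move=> SS dd i; set x := invmx _ *m y.
have : (1%:M - d *: S) *m x = y by rewrite /x mulKVmx //; apply: disc_mx_unit.
move/(congr1 (fun M : 'M[R]_(m, 1) => M i 0)).
by rewrite mulmxBl mul1mx -scalemxAl !mxE => <-; rewrite subrK.
Qed.

Lemma disc_solve_unique S d (y : 'cV[R]_m) x : stochastic S -> 0 <= d < 1 ->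
  disc_fix S d x (fun i => y i 0) -> forall i, x i = (invmx (1%:M - d *: S) *m y) i 0.
Proof.
move=> SS dd xE i; apply/eqP; rewrite -subr_eq0; apply/eqP; move: i.
apply: (disc_fix0 SS dd) => i.
rewrite (disc_solve_fix y SS dd i) xE add0r.
under [X in _ = _ * X]eq_bigr do rewrite mulrBr.
by rewrite sumrB mulrBr; ring.
Qed.

End DiscountedFixpoint.

Section ResetChain.
Variables (R : realType) (m : nat).

Lemma mpowS (M : 'M[R]_m) t : mpow M t.+1 = M *m mpow M t.
Proof. by []. Qed.

Lemma stochastic_mpow (M : 'M[R]_m) t : stochastic M -> stochastic (mpow M t).
Proof.
move=> [M0 M1]; elim: t => [|t [IH0 IH1]].
  split=> [i j|i]; first by rewrite /= mxE; case: (i == j).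
  by under eq_bigr do rewrite /= mxE eq_sym -[_%:R]mulr1; rewrite sum_indicator.
split=> [i j|i]; first by rewrite mpowS mxE; apply: sumr_ge0 => l _; apply: mulr_ge0.
rewrite mpowS; under eq_bigr do rewrite mxE.
by rewrite exchange_big /=; under eq_bigr do rewrite -mulr_sumr IH1 mulr1.
Qed.

Lemma mxBE p q (A B : 'M[R]_(p, q)) i j : (A - B) i j = A i j - B i j.
Proof. by rewrite !mxE. Qed.

Lemma norm_mulmx_le p q (A : 'M[R]_(p, m)) (B : 'M[R]_(m, q)) i j X :
  (forall l, `|B l j| <= X) -> `|(A *m B) i j| <= \sum_l `|A i l| * X.
Proof.
move=> BX; rewrite mxE; apply: le_trans (ler_norm_sum _ _ _) _.
by apply: ler_sum => l _; rewrite normrM ler_wpM2l.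
Qed.

Definition reset_mx (s0 : 'I_m) : 'M[R]_m := \matrix_(i, j) (j == s0)%:R.

Lemma mul_reset_mx q s0 (X : 'M[R]_(m, q)) i j : (reset_mx s0 *m X) i j = X s0 j.
Proof. by rewrite mxE; under eq_bigr do rewrite mxE; rewrite sum_indicator. Qed.

Variables (M : 'M[R]_m) (k : R) (s0 : 'I_m).
Hypotheses (SM : stochastic M) (k01 : 0 < k <= 1).

Local Notation Q := ((1 - k) *: M + k *: reset_mx s0).
Local Notation N := (invmx (1%:M - (1 - k) *: M)).
(* [Pi = 1 mu^T], where [mu^T = k e_{s0}^T N] is the stationary law of [Q]. *)
Local Notation Pi := (k *: (reset_mx s0 *m N)).

Lemma reset_disc_unit : 1%:M - (1 - k) *: M \in unitmx.
Proof. by apply: disc_mx_unit => //; case/andP: k01 => ? ?; apply/andP; split; lra. Qed.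

Lemma reset_stationary_eq : Pi = k *: reset_mx s0 + (1 - k) *: (Pi *m M).
Proof.
have : Pi *m (1%:M - (1 - k) *: M) = k *: reset_mx s0.
  by rewrite -scalemxAl -mulmxA mulVmx ?mulmx1 //; exact: reset_disc_unit.
by rewrite mulmxBr mulmx1 -scalemxAr => <-; rewrite subrK.
Qed.

Lemma reset_chain_stationary : Q *m Pi = Pi.
Proof.
have MR : M *m reset_mx s0 = reset_mx s0.
  apply/matrixP => i j; rewrite !mxE; under eq_bigr do rewrite mxE.
  by rewrite -mulr_suml (proj2 SM) mul1r.
have RR : reset_mx s0 *m reset_mx s0 = reset_mx s0.
  by apply/matrixP => i j; rewrite mul_reset_mx !mxE.
have QR : Q *m reset_mx s0 = reset_mx s0.
  by rewrite mulmxDl -!scalemxAl MR RR -scalerDl subrK scale1r.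
by rewrite -scalemxAr mulmxA QR.
Qed.

Lemma mpow_reset_chain t : mpow Q t = Pi + (1 - k) ^+ t *: ((1%:M - Pi) *m mpow M t).
Proof.
elim: t => [|t IH]; first by rewrite /= expr0 scale1r mulmx1 addrC subrK.
have QPi : Q - Pi = (1 - k) *: ((1%:M - Pi) *m M).
  by rewrite [in LHS]reset_stationary_eq mulmxBl mul1mx scalerBr opprD addrA addrK.
rewrite mpowS IH mulmxDr reset_chain_stationary -scalemxAr mulmxA mulmxBr mulmx1.
by rewrite reset_chain_stationary QPi -scalemxAl -mulmxA exprSr scalerA.
Qed.

Lemma Qinf_reset_chain : Qinf Q = Pi.
Proof.
have g01 : 0 <= 1 - k < 1 by case/andP: k01 => ? ?; apply/andP; split; lra.
apply/matrixP => i j; rewrite mxE.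
apply: (cesaro_lim_geometric (C := \sum_l `|(1%:M - Pi) i l| * 1) g01) => t.
rewrite mpow_reset_chain [X in X - _]mxE addrAC subrr add0r mxE normrM mulrC.
have gt0 : 0 <= (1 - k) ^+ t by rewrite exprn_ge0 //; case/andP: g01.
rewrite [`|_ ^+ t|]ger0_norm // ler_wpM2r //.
apply: norm_mulmx_le => l; have [M0 _] := stochastic_mpow t SM.
by rewrite ger0_norm // stochastic_le1 //; exact: stochastic_mpow.
Qed.

Lemma geom_sum_mpow T :
  \sum_(t < T) (1 - k) ^+ t *: mpow M t = N - (1 - k) ^+ T *: (N *m mpow M T).
Proof.
have geom : (1%:M - (1 - k) *: M) *m \sum_(t < T) (1 - k) ^+ t *: mpow M t =
    1%:M - (1 - k) ^+ T *: mpow M T.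
  elim: T => [|T IH]; first by rewrite big_ord0 mulmx0 expr0 scale1r subrr.
  rewrite big_ord_recr /= mulmxDr IH mulmxBl mul1mx -!scalemxAr -scalemxAl scalerA.
  by rewrite -mpowS -exprSr addrA subrK.
by rewrite -[LHS](mulKmx reset_disc_unit) geom mulmxBr mulmx1 scalemxAr.
Qed.

End ResetChain.
Arguments reset_mx {R m} s0.

Section DiscountedMDP.
Variables (R : realType) (m : nat) (A : finType).
Implicit Types (P : 'I_m -> A -> 'I_m -> R) (r : 'I_m -> A -> R)
  (pi : 'I_m -> A -> R) (d : R) (V : 'I_m -> R).

Definition qval P r d V s a := r s a + d * \sum_j P s a j * V j.

Definition adv P r d pi s a :=
  qval P r d (fun j => Vpi P r d pi j 0) s a - Vpi P r d pi s 0.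

Lemma stochastic_Ppi P pi : is_kernel P -> is_policy pi -> stochastic (Ppi P pi).
Proof.
move=> [P0 P1] [p0 p1]; split=> [i j|i].
  by rewrite mxE; apply: sumr_ge0 => a _; apply: mulr_ge0.
under eq_bigr do rewrite mxE.
by rewrite exchange_big /=; under eq_bigr do rewrite -mulr_sumr P1 mulr1.
Qed.

Lemma rpi_itv r pi s : (forall s a, 0 <= r s a <= 1) -> is_policy pi ->
  0 <= rpi r pi s 0 <= 1.
Proof.
move=> r01 [p0 p1]; rewrite mxE; apply/andP; split.
  by apply: sumr_ge0 => a _; apply: mulr_ge0 => //; case/andP: (r01 s a).
by apply: avg_le => // a; case/andP: (r01 s a).
Qed.

Lemma sum_policy_qval P r pi d V s :
  \sum_a pi s a * qval P r d V s a = rpi r pi s 0 + d * \sum_j Ppi P pi s j * V j.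
Proof.
rewrite mxE; under eq_bigr do rewrite mulrDr.
rewrite big_split /=; congr (_ + _).
under [in RHS]eq_bigr do rewrite mxE mulr_suml.
rewrite exchange_big /= mulr_sumr; apply: eq_bigr => a _.
by rewrite mulrCA mulr_sumr; congr (_ * _); apply: eq_bigr => j _; ring.
Qed.

Section FixedDiscount.
Variables (P : 'I_m -> A -> 'I_m -> R) (r : 'I_m -> A -> R) (d : R).
Hypotheses (KP : is_kernel P) (r01 : forall s a, 0 <= r s a <= 1) (d01 : 0 <= d < 1).

Local Notation V pi := (fun j => Vpi P r d pi j 0).

Lemma Vpi_fix pi : is_policy pi ->
  disc_fix (Ppi P pi) d (V pi) (fun s => rpi r pi s 0).
Proof. by move=> pp; apply: disc_solve_fix => //; apply: stochastic_Ppi. Qed.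

Lemma Vpi_bellman pi s : is_policy pi ->
  Vpi P r d pi s 0 = \sum_a pi s a * qval P r d (V pi) s a.
Proof. by move=> pp; rewrite sum_policy_qval -Vpi_fix. Qed.

Lemma Vpi_sub pi U : is_policy pi ->
  disc_fix (Ppi P pi) d (fun s => Vpi P r d pi s 0 - U s)
    (fun s => \sum_a pi s a * qval P r d U s a - U s).
Proof.
move=> pp s; rewrite sum_policy_qval [in LHS](Vpi_fix pp).
under [X in _ = _ + _ * X]eq_bigr do rewrite mulrBr.
by rewrite sumrB; ring.
Qed.

Lemma Vpi_norm_le pi s : is_policy pi -> `|Vpi P r d pi s 0| <= (1 - d)^-1.
Proof.
move=> pp; rewrite -[_^-1]mul1r.
apply: (disc_fix_norm (stochastic_Ppi KP pp) d01 (Vpi_fix pp)) => j.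
by have /andP[u0 u1] := rpi_itv j r01 pp; rewrite ger0_norm.
Qed.

Lemma Vpi_le_Vstar pi s : is_policy pi -> Vpi P r d pi s 0 <= Vstar P r d s.
Proof.
move=> pp; apply: sup_upper_bound; last by exists pi.
split; first by exists (Vpi P r d pi s 0), pi.
exists (1 - d)^-1 => _ [p /= pp' <-].
exact: le_trans (ler_norm _) (Vpi_norm_le s pp').
Qed.

Lemma Vstar_le U s : (exists pi, is_policy pi) ->
  (forall s a, qval P r d U s a <= U s) -> Vstar P r d s <= U s.
Proof.
move=> [pi0 pp0] Usuper; apply: ge_sup; first by exists (Vpi P r d pi0 s 0), pi0.
move=> _ [pi /= pp <-]; rewrite -subr_le0 -(mul0r (1 - d)^-1).
apply: (disc_fix_le (stochastic_Ppi KP pp) d01 _ (Vpi_sub U pp)) => // i.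
by rewrite subr_le0; case: pp => p0 p1; apply: avg_le.
Qed.

Lemma adv_le0 pi s a : is_policy pi ->
  Vpi P r d pi s 0 = Vstar P r d s -> adv P r d pi s a <= 0.
Proof.
move=> pp pi_opt; rewrite leNgt; apply/negP => adv_pos.
pose pi' s' a' := if s' == s then (a' == a)%:R else pi s' a'.
have pp' : is_policy pi'.
  case: pp => p0 p1; split=> [s' b|s']; rewrite /pi'.
    by case: (s' == s); [case: (b == a) | exact: p0].
  case: (s' == s); last exact: p1.
  by under eq_bigr do rewrite -[_%:R]mulr1; rewrite sum_indicator.
have gain i : \sum_b pi' i b * qval P r d (V pi) i b - Vpi P r d pi i 0 =
    if i == s then adv P r d pi s a else 0.
  rewrite /pi'; have [->|_] := eqVneq i s; first by rewrite sum_indicator.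
  by rewrite -Vpi_bellman // subrr.
have gain0 i : 0 <= \sum_b pi' i b * qval P r d (V pi) i b - Vpi P r d pi i 0.
  by rewrite gain; case: (i == s) => //; exact: ltW.
have := disc_fix_ge (stochastic_Ppi KP pp') d01 (Vpi_sub (V pi) pp') gain0 s.
by rewrite gain eqxx; have := Vpi_le_Vstar s pp'; lra.
Qed.

End FixedDiscount.

Lemma Vpi_lipschitz P r pi d e s : is_kernel P -> (forall s a, 0 <= r s a <= 1) ->
  is_policy pi -> 0 <= d <= e -> e < 1 ->
  `|Vpi P r d pi s 0 - Vpi P r e pi s 0| <= (e - d) / (1 - e) ^+ 2.
Proof.
move=> KP r01 pp /andP[d0 de] e1.
have d01 : 0 <= d < 1 by apply/andP; split => //; lra.
have e01 : 0 <= e < 1 by apply/andP; split => //; lra.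
have SM := stochastic_Ppi KP pp; have [M0 M1] := SM.
have zE : disc_fix (Ppi P pi) d (fun j => Vpi P r d pi j 0 - Vpi P r e pi j 0)
    (fun j => (d - e) * \sum_l Ppi P pi j l * Vpi P r e pi l 0).
  move=> j; rewrite (Vpi_fix r KP d01 pp) (Vpi_fix r KP e01 pp).
  under [X in _ = _ + _ * X]eq_bigr do rewrite mulrBr.
  by rewrite sumrB; ring.
apply: le_trans (disc_fix_norm SM d01 zE (B := (e - d) / (1 - e)) _ s) _.
  move=> j; rewrite normrM distrC [`|e - d|]ger0_norm ?subr_ge0 //.
  apply: ler_wpM2l; first by rewrite subr_ge0.
  by apply: avg_norm_le => // l; apply: Vpi_norm_le.
rewrite expr2 invfM mulrA; apply: ler_wpM2l; first by apply: divr_ge0; lra.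
by rewrite lef_pV2 ?posrE; lra.
Qed.

Lemma adv_lipschitz P r pi d e s a : is_kernel P -> (forall s a, 0 <= r s a <= 1) ->
  is_policy pi -> 0 <= d <= e -> e < 1 ->
  `|adv P r d pi s a - adv P r e pi s a| <= 3 * (e - d) / (1 - e) ^+ 2.
Proof.
move=> KP r01 pp de e1; have /andP[d0 de'] := de.
have e01 : 0 <= e < 1 by apply/andP; split; lra.
have [P0 P1] := KP.
set z := fun j => Vpi P r d pi j 0 - Vpi P r e pi j 0.
set L := (e - d) / (1 - e) ^+ 2.
have zL j : `|z j| <= L by apply: Vpi_lipschitz.
have PzL : `|\sum_j P s a j * z j| <= L by apply: avg_norm_le.
have PV : `|\sum_j P s a j * Vpi P r e pi j 0| <= (1 - e)^-1.
  by apply: avg_norm_le => // j; apply: Vpi_norm_le.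
have advE : adv P r d pi s a - adv P r e pi s a =
    d * \sum_j P s a j * z j + (d - e) * \sum_j P s a j * Vpi P r e pi j 0 - z s.
  rewrite /adv /qval /z; under [in RHS]eq_bigr do rewrite mulrBr.
  by rewrite sumrB; ring.
have L0 : 0 <= L by apply: le_trans (zL s).
have q1 : 1 <= (1 - e)^-1 by rewrite invf_ge1 ?subr_gt0; lra.
have qL : (e - d) * (1 - e)^-1 <= L.
  by rewrite /L expr2 invfM mulrA ler_peMr //; apply: divr_ge0; lra.
have t1 : `|d * \sum_j P s a j * z j| <= L.
  by rewrite normrM ger0_norm //; nra.
have t2 : `|(d - e) * \sum_j P s a j * Vpi P r e pi j 0| <= L.
  rewrite normrM distrC [`|e - d|]ger0_norm ?subr_ge0 //; apply: le_trans qL.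
  by apply: ler_wpM2l; rewrite ?subr_ge0.
rewrite advE -mulrA -/L; apply: le_trans (ler_normB _ _) _.
have := ler_normD (d * \sum_j P s a j * z j)
  ((d - e) * \sum_j P s a j * Vpi P r e pi j 0).
by have := zL s; lra.
Qed.

End DiscountedMDP.

Section ResetPerturbation.
Variables (R : realType) (m : nat) (A : finType).
Variables (P : 'I_m -> A -> 'I_m -> R) (r : 'I_m -> A -> R) (n : nat) (s0 : 'I_m).
Hypotheses (KP : is_kernel P) (r01 : forall s a, 0 <= r s a <= 1) (n_gt0 : (0 < n)%N).
Implicit Types (pi : 'I_m -> A -> R).

Local Notation k := (n%:R^-1 : R).
Local Notation Pl := (Plow P n s0).

Lemma reset_weight : 0 < k <= 1.
Proof. by rewrite invr_gt0 ltr0n n_gt0 invf_le1 ?ler1n ?ltr0n. Qed.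

Lemma kernel_Plow : is_kernel Pl.
Proof.
have [P0 P1] := KP; have /andP[k0 k1] := reset_weight; split=> [s a s'|s a].
  by apply: addr_ge0; apply: mulr_ge0 => //; lra.
rewrite /Plow big_split /= -!mulr_sumr P1; under eq_bigr do rewrite -[_%:R]mulr1.
by rewrite sum_indicator; ring.
Qed.

Lemma Ppi_Plow_entry pi i j : is_policy pi ->
  Ppi Pl pi i j = (1 - k) * Ppi P pi i j + k * (j == s0)%:R.
Proof.
move=> [p0 p1]; rewrite !mxE /Plow.
under eq_bigr do rewrite mulrDr mulrCA [X in _ + X]mulrCA.
by rewrite big_split /= -!mulr_sumr -[X in _ + _ * X]mulr_suml p1 mul1r.
Qed.

Lemma Ppi_Plow pi : is_policy pi ->
  Ppi Pl pi = (1 - k) *: Ppi P pi + k *: reset_mx s0.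
Proof. by move=> pp; apply/matrixP => i j; rewrite Ppi_Plow_entry // !mxE. Qed.

Lemma Vpi_Plow pi b s : is_policy pi -> 0 <= b < 1 ->
  Vpi Pl r b pi s 0 = Vpi P r (b * (1 - k)) pi s 0
    + b * k / (1 - b) * Vpi P r (b * (1 - k)) pi s0 0.
Proof.
move=> pp /andP[b0 b1]; have /andP[k0 k1] := reset_weight.
set V := fun j => Vpi P r (b * (1 - k)) pi j 0; set c := b * k / (1 - b) * V s0.
have dl01 : 0 <= b * (1 - k) < 1 by apply/andP; split; nra.
have SQ := stochastic_Ppi kernel_Plow pp.
symmetry; apply: (disc_solve_unique (x := fun i => V i + c) SQ) => [|i]; first lra.
have sumQ : \sum_j Ppi Pl pi i j * (V j + c) =
    (1 - k) * \sum_j Ppi P pi i j * V j + k * V s0 + c.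
  under eq_bigr do rewrite mulrDr.
  rewrite big_split /= -mulr_suml (proj2 SQ i) mul1r; congr (_ + _).
  under eq_bigr do rewrite Ppi_Plow_entry // mulrDl -!mulrA.
  by rewrite big_split /= -!mulr_sumr sum_indicator.
rewrite sumQ /c /V /= [in LHS](Vpi_fix r KP dl01 pp).
by field; rewrite pnatr_eq0 -lt0n n_gt0 subr_eq0 eq_sym lt_eqF.
Qed.

Lemma sum_Plow_shift (V : 'I_m -> R) c s a :
  \sum_j Pl s a j * (V j + c) = (1 - k) * \sum_j P s a j * V j + k * V s0 + c.
Proof.
under eq_bigr do rewrite /Plow mulrDr !mulrDl -!mulrA.
rewrite !big_split /= -!mulr_sumr !sum_indicator -mulr_suml (proj2 KP s a).
by ring.
Qed.

Lemma adv_Plow pi b s a : is_policy pi -> 0 <= b < 1 ->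
  adv Pl r b pi s a = adv P r (b * (1 - k)) pi s a.
Proof.
move=> pp b01; have /andP[b0 b1] := b01; rewrite /adv /qval.
under eq_bigr do rewrite Vpi_Plow //.
rewrite Vpi_Plow // sum_Plow_shift.
by field; rewrite pnatr_eq0 -lt0n n_gt0 subr_eq0 eq_sym lt_eqF.
Qed.

(* A Blackwell-optimal policy of the reset chain has no improving action at any
   discount [b] close to [1], hence none, by continuity, in the original chain at
   the limiting discount [1 - k]. *)
Lemma adv_blackwell_le0 piB s a :
  blackwell_optimal Pl r piB -> adv P r (1 - k) piB s a <= 0.
Proof.
case=> ppB [b0 [/andP[b00 b01] optB]]; have /andP[k0 k1] := reset_weight.
set K := 3 / k ^+ 2; have K0 : 0 < K by rewrite divr_gt0 // exprn_gt0.
have adv_near1 b : b0 < b < 1 -> adv P r (1 - k) piB s a <= K * (1 - b).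
  move=> bb; have /andP[bb0 bb1] := bb.
  have b01' : 0 <= b < 1 by apply/andP; split; lra.
  have adv_b : adv P r (b * (1 - k)) piB s a <= 0.
    by rewrite -adv_Plow //; apply: (adv_le0 kernel_Plow r01 b01' a ppB); apply: optB.
  have de : 0 <= b * (1 - k) <= 1 - k by apply/andP; split; nra.
  have k_lt1 : 1 - k < 1 by lra.
  have := adv_lipschitz s a KP r01 ppB de k_lt1.
  have gap : 3 * (1 - k - b * (1 - k)) / k ^+ 2 <= K * (1 - b).
    by rewrite /K mulrAC; apply: ler_wpM2l; [exact: ltW | nra].
  have -> : 1 - (1 - k) = k by ring.
  by rewrite ler_norml => /andP[? _]; lra.
apply/ler_addgt0Pr => e e0; rewrite add0r.
set eps := Num.min ((1 - b0) / 2) (e / K).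
have eps0 : 0 < eps by rewrite lt_min divr_gt0 ?subr_gt0 //= divr_gt0.
have eps_b0 : eps <= (1 - b0) / 2 by rewrite ge_min lexx.
have eps_e : eps * K <= e by rewrite -ler_pdivlMr // ge_min lexx orbT.
apply: le_trans (adv_near1 (1 - eps) _) _; first by apply/andP; split; lra.
by rewrite opprB addrC subrK mulrC.
Qed.

Lemma bias_Plow piB : is_policy piB ->
  exists D, forall s, bias Pl r piB s = Vpi P r (1 - k) piB s 0 - D.
Proof.
move=> ppB; have k01 := reset_weight; have /andP[k0 k1] := k01.
have g01 : 0 <= 1 - k < 1 by apply/andP; split; lra.
set M := Ppi P piB; set u := rpi r piB; have SM : stochastic M := stochastic_Ppi KP ppB.
set N := invmx (1%:M - (1 - k) *: M); set W := 1%:M - k *: (reset_mx s0 *m N).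
exists (k * (N *m (N *m u)) s0 0) => s.
rewrite /bias /= Ppi_Plow // Qinf_reset_chain //.
have partial T : \sum_(t < T) ((mpow ((1 - k) *: M + k *: reset_mx s0) t *m u) s 0
      - (k *: (reset_mx s0 *m N) *m u) s 0)
    = (W *m N *m u) s 0 - (1 - k) ^+ T * (W *m N *m (mpow M T *m u)) s 0.
  transitivity ((\sum_(t < T) (1 - k) ^+ t *: (W *m (mpow M t *m u))) s 0).
    rewrite summxE; apply: eq_bigr => t _.
    by rewrite -mxBE -mulmxBl mpow_reset_chain // addrC addKr -scalemxAl -mulmxA.
  under eq_bigr do rewrite scalemxAr scalemxAl.
  rewrite -mulmx_sumr -mulmx_suml geom_sum_mpow // -/N [(N - _) *m u]mulmxBl mulmxBr mxBE.
  by rewrite -scalemxAl -scalemxAr [X in _ - X]mxE !mulmxA.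
have -> : Vpi P r (1 - k) piB s 0 - k * (N *m (N *m u)) s0 0 = (W *m N *m u) s 0.
  rewrite /W -mulmxA mulmxBl mul1mx mxBE -scalemxAl [X in _ = _ - X]mxE -mulmxA.
  by rewrite mul_reset_mx.
apply: (cesaro_lim_geometric (C := \sum_l `|(W *m N) s l| * 1) g01) => T.
have gT0 : 0 <= (1 - k) ^+ T by rewrite exprn_ge0 //; lra.
rewrite partial addrAC subrr add0r normrN normrM [`|_ ^+ T|]ger0_norm // mulrC.
apply: ler_wpM2r => //; apply: norm_mulmx_le => l; rewrite mxE.
have [M0 M1] := stochastic_mpow T SM; apply: avg_norm_le => // j.
by have /andP[u0 u1] := rpi_itv j r01 ppB; rewrite ger0_norm.
Qed.

Lemma greedy_step_loss pi piB h (d : 'I_m -> R) D i :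
  is_policy pi -> is_policy piB -> greedy pi (rPh Pl r h) ->
  (forall j, Vpi P r (1 - k) piB j 0 = h j + d j + D) ->
  Vpi P r (1 - k) piB i 0
    - \sum_a pi i a * qval P r (1 - k) (fun j => Vpi P r (1 - k) piB j 0) i a
    <= (1 - k) * spn d.
Proof.
move=> pp ppB greedy_pi VE; have /andP[k0 k1] := reset_weight.
have g01 : 0 <= 1 - k < 1 by apply/andP; split; lra.
have [P0 P1] := KP; have [p0 p1] := pp; have [q0 q1] := ppB.
set V := fun j => Vpi P r (1 - k) piB j 0.
set G := fun a => r i a + (1 - k) * \sum_j P i a j * h j.
set Hd := fun a => \sum_j P i a j * d j.
have avgE (p : 'I_m -> A -> R) : is_policy p -> \sum_a p i a * qval P r (1 - k) V i a
    = \sum_a p i a * G a + (1 - k) * \sum_a p i a * Hd a + (1 - k) * D.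
  case=> _ p1'; rewrite (eq_bigr (fun a => p i a * G a + (1 - k) * (p i a * Hd a)
    + (1 - k) * D * p i a)) => [|a _]; last first.
    rewrite /qval /G /Hd /V; under eq_bigr do rewrite VE !mulrDr.
    by rewrite !big_split /= -mulr_suml P1; ring.
  by rewrite !big_split /= -!mulr_sumr p1' mulr1.
(* [rPh Pl r h] is [G] up to the constant [k h(s0)]. *)
have G_le b : G b <= \sum_a pi i a * G a.
  have rPhE a : rPh Pl r h i a = G a + k * h s0.
    rewrite /rPh /Plow /G; under eq_bigr do rewrite mulrDl -!mulrA.
    by rewrite big_split /= -!mulr_sumr sum_indicator; ring.
  have := le_sup_range (rPh Pl r h i) b; rewrite -greedy_pi rPhE.
  under eq_bigr do rewrite rPhE mulrDr.
  by rewrite big_split /= -mulr_suml p1 mul1r; lra.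
rewrite {1}(Vpi_bellman r KP g01 i ppB) !avgE //.
have e1 : \sum_a piB i a * G a <= \sum_a pi i a * G a by apply: avg_le.
have e2 : \sum_a piB i a * Hd a <= sup (range d).
  by apply: avg_le => // a; apply: avg_le => // j; apply: le_sup_range.
have e3 : inf (range d) <= \sum_a pi i a * Hd a.
  by apply: avg_ge => // a; apply: avg_ge => // j; apply: inf_range_le.
have : (1 - k) * (\sum_a piB i a * Hd a - \sum_a pi i a * Hd a) <= (1 - k) * spn d.
  by apply: ler_wpM2l; rewrite /spn; lra.
lra.
Qed.

Lemma greedy_gap pi piB h (d : 'I_m -> R) D s :
  is_policy pi -> is_policy piB -> greedy pi (rPh Pl r h) ->
  (forall j, Vpi P r (1 - k) piB j 0 = h j + d j + D) ->
  Vpi P r (1 - k) piB s 0 - Vpi P r (1 - k) pi s 0 <= (n%:R - 1) * spn d.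
Proof.
move=> pp ppB greedy_pi VE; have /andP[k0 k1] := reset_weight.
have g01 : 0 <= 1 - k < 1 by apply/andP; split; lra.
have sp0 : 0 <= spn d.
  by rewrite subr_ge0; exact: le_trans (inf_range_le d s) (le_sup_range d s).
have gapE := disc_fix_opp (Vpi_sub r KP g01 (fun j => Vpi P r (1 - k) piB j 0) pp).
have := disc_fix_le (B := (1 - k) * spn d) (stochastic_Ppi KP pp) g01 _ gapE _ s.
have -> : (1 - k) * spn d / (1 - (1 - k)) = (n%:R - 1) * spn d.
  by rewrite subKr; field; rewrite pnatr_eq0 -lt0n n_gt0.
rewrite opprB; apply; first by apply: mulr_ge0 => //; lra.
by move=> i; rewrite opprB; exact: greedy_step_loss VE.
Qed.

End ResetPerturbation.

Theorem mainTheorem18 (R : realType) (m : nat) (A : finType)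
    (P : 'I_m -> A -> 'I_m -> R) (r : 'I_m -> A -> R) (n : nat) (s0 : 'I_m)
    (pi : 'I_m -> A -> R) (h : 'I_m -> R) (piB : 'I_m -> A -> R) :
  is_kernel P ->
  (forall s a, 0 <= r s a <= 1) ->
  (2 <= n)%N ->
  is_policy pi ->
  greedy pi (rPh (Plow P n s0) r h) ->
  blackwell_optimal (Plow P n s0) r piB ->
  forall s : 'I_m,
    Vstar P r (1 - n%:R^-1) s - (Vpi P r (1 - n%:R^-1) pi) s 0
      <= (n%:R - 1) * spn (fun s' => bias (Plow P n s0) r piB s' - h s').
Proof.
move=> KP r01 n2 pp greedy_pi optB s.
have n0 : (0 < n)%N by apply: leq_trans n2.
have [ppB _] := optB.
have /andP[k0 k1] := reset_weight R n0.
have g01 : 0 <= 1 - (n%:R^-1 : R) < 1 by apply/andP; split; lra.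
have [D biasE] := bias_Plow s0 KP r01 n0 ppB.
have VE j : Vpi P r (1 - n%:R^-1) piB j 0 = h j + (bias (Plow P n s0) r piB j - h j) + D.
  by rewrite biasE; ring.
apply: le_trans (greedy_gap KP n0 s pp ppB greedy_pi VE).
rewrite lerD2r; apply: (Vstar_le (U := fun j => Vpi P r _ piB j 0) KP g01).
  by exists pi.
by move=> i a; rewrite -subr_le0; exact: (adv_blackwell_le0 KP r01 n0 i a optB).
Qed.
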